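(* Let $\mathfrak{g}$ be a symmetric social storage network on $N$ agents with stability point $\hat\eta$, which has evolved from the null network and has $\kappa\ge2$ connected components. Suppose $\hat\eta$ is odd and $N>\hat\eta$. If $\mathfrak{g}$ is bilaterally stable, then at least $\kappa-1$ of its components consist of an even number of agents greater than $\hat\eta$.
   Context: A network is a simple undirected graph on a finite set $\mathbf{A}$ of $N$ agents, and $\eta_i(\mathfrak{g})$ is the degree (neighbourhood size) of $i$. Parameters are: disk failure rate $\lambda\in(0,1)$, per-link cost $c$, data worths $\beta_i>0$, storage $s_i$, data size $d_i$ and budget $b_i$. Remaining storage is $RS_i=s_i-\sum_{j\text{ neighbour of }i}d_j$ and remaining budget is $RB_i=b_i-c\,\eta_i(\mathfrak{g})$. A symmetric social storage network is one of the following four types. (a) SVN with sufficient storage under the Multi-Objective Framework (MO): - $\beta_i=\beta$, with $\beta,\lambda,c\in(0,1)$; - $s_i\ge\sum_{j\ne i}d_j$; - $u_i=\beta(1-\lambda^{\eta_i})-c\eta_i$; - it is assumed that $c<\beta(1-\lambda)$ and $L=|\ln(c/(\beta(1-\lambda)))|/|\ln\lambda|$ is not an integer; the stability point is $\hat\eta=\lceil L\rceil$. (b) SV-SRN under MO: - as in (a) but with $s_i=s$ and $d_i=d$ (with $s/d$ an integer) instead of sufficient storage; - the stability point is $\hat\eta=\min\{\lceil L\rceil,s/d\}$. (c) SVN with sufficient storage and budget under the Single-Objective Framework (SO): - $\beta_i=\beta$; - $s_i\ge\sum_{j\ne i}d_j$ and $b_i\ge c(N-1)$; - $u_i=\beta(1-\lambda^{\eta_i})$;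 - the stability point is $\hat\eta=N-1$. (d) SRN under SO: - $s_i=s$, $d_i=d$, $b_i=b$ (with $s/d$ and $b/c$ integers); - $u_i=\beta_i(1-\lambda^{\eta_i})$; - the stability point is $\hat\eta=\min\{s/d,b/c\}$. Agent $i$ is willing to add the link $\langle ij\rangle$ if $u_i(\mathfrak{g}+\langle ij\rangle)>u_i(\mathfrak{g})$, together with $RS_j\ge d_i$ in types (b) and (d), and additionally $RB_i\ge c$ in type (d). Bilateral stability means both of the following hold. 1. For every link $\langle ij\rangle$: if $u_i(\mathfrak{g}-\langle ij\rangle)>u_i(\mathfrak{g})$, then $u_j(\mathfrak{g}-\langle ij\rangle)<u_j(\mathfrak{g})$. 2. For every non-link $\langle ij\rangle$: if $i$ is willing to add $\langle ij\rangle$, then $j$ is not willing to add it. $\mathfrak{g}$ has evolved from the null network if it is obtained from the network with no links by a finite sequence of single link additions $\langle ij\rangle$, each performed only when both $i$ and $j$ are willing to add it at that moment. *)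

From HB Require Import structures.
From mathcomp Require Import all_boot all_order all_algebra.
From mathcomp Require Import reals exp.
Set Implicit Arguments.
Unset Strict Implicit.
Unset Printing Implicit Defensive.
Import Order.TTheory GRing.Theory Num.Theory.
Local Open Scope ring_scope.

Section SSN.
Variable R : realType.
Variable A : finType.   (* the set of agents; N = #|A| *)

(* A network is a set of links, each link being the 2-element set {i,j}. *)
Definition network := {set {set A}}.
Definition null_network : network := set0.

Definition linked (g : network) (i j : A) : bool := [set i; j] \in g.
Definition add_link (g : network) (i j : A) : network := [set i; j] |: g.
Definition del_link (g : network) (i j : A) : network := g :\ [set i; j].

Definition nbrs (g : network) (i : A) : {set A} :=
  [set j | (j != i) && linked g i j].
Definition deg (g : network) (i : A) : nat := #|nbrs g i|.

Inductive ssn :=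
  (* (a) SVN with sufficient storage, MO: beta, lambda, c, s_i, d_i *)
| SVN_MO  of R & R & R & (A -> R) & (A -> R)
  (* (b) SV-SRN, MO: beta, lambda, c, s, d *)
| SVSRN_MO of R & R & R & R & R
  (* (c) SVN with sufficient storage and budget, SO: beta, lambda, c, s_i, d_i, b_i *)
| SVN_SO  of R & R & R & (A -> R) & (A -> R) & (A -> R)
  (* (d) SRN, SO: beta_i, lambda, c, s, d, b *)
| SRN_SO  of (A -> R) & R & R & R & R & R.

Definition Lval (beta lam c : R) : R :=
  `|ln (c / (beta * (1 - lam)))| / `|ln lam|.

Definition is_int (x : R) : Prop := exists z : int, x = z%:~R.
Definition is_nat (x : R) : Prop := exists m : nat, x = m%:R.

Definition ssn_valid (t : ssn) : Prop :=
  match t with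
  | SVN_MO beta lam c s d =>
      [/\ 0 < beta < 1, 0 < lam < 1, 0 < c < 1,
          (forall i, s i >= \sum_(j | j != i) d j) &
          (c < beta * (1 - lam) /\ ~ is_int (Lval beta lam c))]
  | SVSRN_MO beta lam c s d =>
      [/\ 0 < beta < 1, 0 < lam < 1, 0 < c < 1,
          0 < d /\ is_nat (s / d) &
          (c < beta * (1 - lam) /\ ~ is_int (Lval beta lam c))]
  | SVN_SO beta lam c s d b =>
      [/\ 0 < beta, 0 < lam < 1,
          (forall i, s i >= \sum_(j | j != i) d j) &
          (forall i, b i >= c * (#|A| - 1)%:R)]
  | SRN_SO beta lam c s d b =>
      [/\ (forall i, 0 < beta i), 0 < lam < 1,
          0 < d /\ is_nat (s / d) & 0 < c /\ is_nat (b / c)]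
  end.

Definition util (t : ssn) (g : network) (i : A) : R :=
  match t with
  | SVN_MO beta lam c _ _ | SVSRN_MO beta lam c _ _ =>
      beta * (1 - lam ^+ deg g i) - c * (deg g i)%:R
  | SVN_SO beta lam _ _ _ _ => beta * (1 - lam ^+ deg g i)
  | SRN_SO beta lam _ _ _ _ => beta i * (1 - lam ^+ deg g i)
  end.

Definition RS (s d : A -> R) (g : network) (i : A) : R :=
  s i - \sum_(j in nbrs g i) d j.
Definition RB (b : A -> R) (c : R) (g : network) (i : A) : R :=
  b i - c * (deg g i)%:R.

Definition willing (t : ssn) (g : network) (i j : A) : Prop :=
  util t (add_link g i j) i > util t g i /\
  match t with
  | SVN_MO _ _ _ _ _ | SVN_SO _ _ _ _ _ _ => True
  | SVSRN_MO _ _ _ s d => RS (fun _ => s) (fun _ => d) g j >= d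
  | SRN_SO _ _ c s d b =>
      RS (fun _ => s) (fun _ => d) g j >= d /\ RB (fun _ => b) c g i >= c
  end.

(* Stability point hat-eta (a real number; an integer under the hypotheses). *)
Definition stab_point (t : ssn) : R :=
  match t with
  | SVN_MO beta lam c _ _ => (Num.ceil (Lval beta lam c))%:~R
  | SVSRN_MO beta lam c s d => Num.min (Num.ceil (Lval beta lam c))%:~R (s / d)
  | SVN_SO _ _ _ _ _ _ => (#|A| - 1)%:R
  | SRN_SO _ _ c s d b => Num.min (s / d) (b / c)
  end.

Definition bilaterally_stable (t : ssn) (g : network) : Prop :=
  (forall i j, i != j -> linked g i j ->
     util t (del_link g i j) i > util t g i ->
     util t (del_link g i j) j < util t g j) /\
  (forall i j, i != j -> ~~ linked g i j ->
     willing t g i j -> ~ willing t g j i).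

Inductive evolved (t : ssn) : network -> Prop :=
| ev_null : evolved t null_network
| ev_add g i j : evolved t g -> i != j -> ~~ linked g i j ->
    willing t g i j -> willing t g j i -> evolved t (add_link g i j).

Definition component (g : network) (x : A) : {set A} :=
  [set y | connect (linked g) x y].
Definition components (g : network) : {set {set A}} :=
  [set component g x | x in A].

Definition odd_real (x : R) : Prop := exists k : nat, x = (2 * k + 1)%:R.

End SSN.

From HB Require Import structures.
From mathcomp Require Import all_boot all_order all_algebra.
From mathcomp Require Import reals exp.
From mathcomp Require Import zify ring.
Set Implicit Arguments.
Unset Strict Implicit.
Unset Printing Implicit Defensive.
Import Order.TTheory GRing.Theory Num.Theory.
Local Open Scope ring_scope.

(* Along the evolution from the null network a link is added only when both
   end points have degree below the stability point n, so no agent ever exceeds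
   degree n.  In a bilaterally stable network two agents of degree below n are
   linked, since otherwise both would be willing to add the link; hence all of
   them lie in one component.  Every other component is n-regular: as n is odd,
   the handshake lemma makes its order even, and it contains an agent together
   with its n neighbours, so its order exceeds n. *)

Section Links.
Variable A : finType.
Implicit Types (g : network A) (i j x y : A).

Lemma linkedC g : symmetric (linked g).
Proof. by move=> i j; rewrite /linked setUC. Qed.

Lemma add_linkC g i j : add_link g i j = add_link g j i.
Proof. by rewrite /add_link (setUC [set i]). Qed.

Lemma in_nbrs g i j : (j \in nbrs g i) = (j != i) && linked g i j.
Proof. by rewrite inE. Qed.

Lemma linked_add_link g i j x y :
  linked (add_link g i j) x y = ([set x; y] == [set i; j]) || linked g x y.
Proof. by rewrite /linked /add_link !inE. Qed.

Lemma nbrs_add_link_self g i j : i != j ->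
  nbrs (add_link g i j) i = j |: nbrs g i.
Proof.
move=> neq_ij; apply/setP=> y; rewrite !inE linked_add_link.
have [->|neq_yj] := eqVneq y j; first by rewrite eq_sym neq_ij eqxx.
have [//|neq_yi /=] := eqVneq y i.
case: eqP => // eq_pair.
have : y \in [set i; j] by rewrite -eq_pair set22.
by rewrite !inE (negbTE neq_yi) (negbTE neq_yj).
Qed.

Lemma nbrs_add_link_other g i j x : x != i -> x != j ->
  nbrs (add_link g i j) x = nbrs g x.
Proof.
move=> neq_xi neq_xj; apply/setP=> y; rewrite !in_nbrs linked_add_link.
case: (@eqP _ [set x; y]) => // eq_pair.
have : x \in [set i; j] by rewrite -eq_pair set21.
by rewrite !inE (negbTE neq_xi) (negbTE neq_xj).
Qed.

Lemma deg_add_link_self g i j : i != j -> ~~ linked g i j ->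
  deg (add_link g i j) i = (deg g i).+1.
Proof.
move=> neq_ij unlinked; rewrite /deg nbrs_add_link_self // cardsU1 in_nbrs.
by rewrite (negbTE unlinked) andbF.
Qed.

Lemma deg_add_link_other g i j x : x != i -> x != j ->
  deg (add_link g i j) x = deg g x.
Proof. by move=> neq_xi neq_xj; rewrite /deg nbrs_add_link_other. Qed.

Lemma deg_null x : deg (null_network A) x = 0%N.
Proof.
apply/eqP; rewrite cards_eq0; apply/eqP/setP=> y.
by rewrite !inE /linked /null_network inE andbF.
Qed.

Lemma deg_lt_unlinked g i j : i != j -> ~~ linked g i j ->
  (deg g i < #|A| - 1)%N.
Proof.
move=> neq_ij unlinked.
have sub : nbrs g i \subset ~: [set i; j].
  apply/subsetP=> y; rewrite in_nbrs !inE negb_or => /andP[-> linked_iy] /=.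
  by apply: contraNneq unlinked => <-.
have := cardsC [set i; j]; have := subset_leq_card sub.
rewrite cards2 neq_ij /deg; lia.
Qed.

End Links.

Section Components.
Variable A : finType.
Implicit Types (g : network A) (x y z : A).

Lemma mem_component g x : x \in component g x.
Proof. by rewrite inE connect0. Qed.

Lemma linked_mem_component g x y : linked g x y -> y \in component g x.
Proof. by rewrite inE => /connect1. Qed.

Lemma component_eq g x y : y \in component g x -> component g y = component g x.
Proof.
rewrite inE => conn_xy; apply/setP=> z; rewrite !inE.
by rewrite (same_connect (sym_connect_sym (@linkedC _ g)) conn_xy).
Qed.

Lemma nbrs_sub_component g x y : y \in component g x ->
  nbrs g y \subset component g x.
Proof.
rewrite inE => conn_xy; apply/subsetP=> z; rewrite !inE => /andP[_ linked_yz].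
exact: connect_trans conn_xy (connect1 linked_yz).
Qed.

Lemma deg_lt_card_component g x : (deg g x < #|component g x|)%N.
Proof.
have sub : nbrs g x \subset component g x :\ x.
  apply/subsetP=> y y_nbr; rewrite in_setD1.
  rewrite (subsetP (nbrs_sub_component (mem_component g x)) _ y_nbr) andbT.
  by move: y_nbr; rewrite in_nbrs => /andP[].
rewrite (cardsD1 x) mem_component add1n ltnS.
exact: subset_leq_card.
Qed.

End Components.

Lemma sum_symmetric_irreflexive_even (T : finType) (C : {pred T}) (r : rel T) :
  symmetric r -> irreflexive r -> ~~ odd (\sum_(y in C) \sum_(z in C) r y z).
Proof.
move=> r_sym r_irr.
pose before (y z : T) := (enum_rank y < enum_rank z)%N.
have split_pair y z : r y z = (r y z * before y z + r y z * before z y)%N :> nat.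
  case: (boolP (r y z)) => //= r_yz; rewrite /before.
  case: ltngtP => // /val_inj/enum_rank_inj eq_yz.
  by rewrite eq_yz r_irr in r_yz.
have swap : (\sum_(y in C) \sum_(z in C) r y z * before z y =
             \sum_(y in C) \sum_(z in C) r y z * before y z)%N.
  rewrite exchange_big; apply: eq_bigr => y _; apply: eq_bigr => z _.
  by rewrite r_sym.
rewrite (eq_bigr _ (fun y _ => eq_bigr _ (fun z _ => split_pair y z))).
rewrite (eq_bigr _ (fun y _ => big_split _ _ _ _ _)) big_split /= swap.
by rewrite addnn odd_double.
Qed.

Lemma regular_component_even (A : finType) (g : network A) x n : odd n ->
  {in component g x, forall y, deg g y = n} -> ~~ odd #|component g x|.
Proof.
move=> odd_n regular; set C := component g x.
have deg_sum y : y \in C -> deg g y = (\sum_(z in C) (z \in nbrs g y))%N.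
  move=> y_C; rewrite -big_mkcondr sum1_card /deg.
  apply: eq_card => z; apply/idP/andP => [z_nbr|[] //]; split=> //.
  exact: (subsetP (nbrs_sub_component y_C)).
have nbrs_sym : symmetric (fun y z => z \in nbrs g y).
  by move=> y z; rewrite !in_nbrs eq_sym linkedC.
have nbrs_irr : irreflexive (fun y z => z \in nbrs g y).
  by move=> y; rewrite in_nbrs eqxx.
have := sum_symmetric_irreflexive_even C nbrs_sym nbrs_irr.
rewrite -(eq_bigr _ deg_sum) (eq_bigr _ regular) sum_nat_const.
by rewrite oddM odd_n andbT.
Qed.

Lemma components_count_saturated (A : finType) (g : network A) n : odd n ->
  (forall x, deg g x <= n)%N ->
  (forall x y, x != y -> deg g x < n -> deg g y < n -> linked g x y)%N ->
  (#|components g| - 1 <=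
     #|[set C in components g | ~~ odd #|C| & (n < #|C|)%N]|)%N.
Proof.
move=> odd_n deg_le unsat_linked.
set good := [set C in _ | _].
have saturated_good x : {in component g x, forall y, deg g y = n} ->
    component g x \in good.
  move=> regular; rewrite !inE imset_f //= (regular_component_even odd_n) //=.
  by rewrite -(regular x (mem_component g x)) deg_lt_card_component.
case: (pickP (fun x => deg g x < n)%N) => [x0 unsat_x0|all_sat]; last first.
  have sub : components g \subset good.
    apply/subsetP=> _ /imsetP[x _ ->]; apply: saturated_good => y _.
    by apply/eqP; rewrite eqn_leq deg_le leqNgt all_sat.
  exact: leq_trans (leq_subr _ _) (subset_leq_card sub).
have sub : components g :\ component g x0 \subset good.
  apply/subsetP=> C /setD1P[neq_C /imsetP[x _ eq_C]]; subst C.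
  apply: saturated_good => y y_C; apply/eqP; rewrite eqn_leq deg_le leqNgt.
  apply: contra neq_C => unsat_y; rewrite -(component_eq y_C).
  have [<-//|neq_x0y] := eqVneq x0 y.
  have linked_x0y := unsat_linked _ _ neq_x0y unsat_x0 unsat_y.
  by rewrite (component_eq (linked_mem_component linked_x0y)).
have x0_comp : component g x0 \in components g by apply: imset_f.
have := subset_leq_card sub.
by rewrite (cardsD1 (component g x0) (components g)) x0_comp add1n subn1.
Qed.

Section MarginalUtility.
Variable R : realType.

(* The (k+1)-st link gains [beta (1 - lam) lam^k - c], which is positive iff
   [lam^k > c / (beta (1 - lam))]; taking logarithms, iff [k < L]. *)
Lemma MO_utility_increasing_iff (beta lam c : R) (k : nat) :
  0 < beta -> 0 < lam < 1 -> 0 < c -> c < beta * (1 - lam) ->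
  (beta * (1 - lam ^+ k) - c * k%:R < beta * (1 - lam ^+ k.+1) - c * k.+1%:R)
  = (k%:Z < Num.ceil (Lval beta lam c)).
Proof.
move=> beta_gt0 /andP[lam_gt0 lam_lt1] c_gt0 c_lt.
have gain : beta * (1 - lam ^+ k.+1) - c * k.+1%:R
    - (beta * (1 - lam ^+ k) - c * k%:R) = beta * (1 - lam) * lam ^+ k - c.
  by rewrite exprS -addn1 natrD; ring.
have scale_gt0 : 0 < beta * (1 - lam) by rewrite mulr_gt0 // subr_gt0.
set q := c / (beta * (1 - lam)).
have q_gt0 : 0 < q by rewrite divr_gt0.
have ln_q_lt0 : ln q < 0 by rewrite ln_lt0 // q_gt0 ltr_pdivrMr // mul1r.
have ln_lam_lt0 : ln lam < 0 by rewrite ln_lt0 // lam_gt0.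
rewrite ceil_gt_int -subr_gt0 gain subr_gt0 [_ * lam ^+ k]mulrC.
rewrite -ltr_pdivrMr // -/q.
rewrite -ltr_ln ?posrE ?exprn_gt0 // lnXn // /Lval -/q.
rewrite (ltr0_norm ln_q_lt0) (ltr0_norm ln_lam_lt0) ltr_pdivlMr ?oppr_gt0 //.
by rewrite mulrN ltrN2 mulrC mulrzr.
Qed.

Lemma SO_utility_increasing (beta lam : R) (k : nat) : 0 < beta -> 0 < lam < 1 ->
  beta * (1 - lam ^+ k) < beta * (1 - lam ^+ k.+1).
Proof.
move=> beta_gt0 /andP[lam_gt0 lam_lt1]; rewrite -subr_gt0.
have -> : beta * (1 - lam ^+ k.+1) - beta * (1 - lam ^+ k)
    = beta * (1 - lam) * lam ^+ k by rewrite exprS; ring.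
by rewrite !mulr_gt0 ?subr_gt0 ?exprn_gt0.
Qed.

Lemma remaining_capacity_ge_iff (s d : R) (m k : nat) : 0 < d -> s / d = m%:R ->
  (d <= s - d * k%:R) = (k < m)%N.
Proof.
move=> d_gt0 s_div_d.
have -> : s = m%:R * d by rewrite -s_div_d divfK // gt_eqF.
have -> : d <= m%:R * d - d * k%:R = (k.+1%:R * d <= m%:R * d).
  by rewrite lerBrDr -addn1 natrD mulrDl mul1r mulrC addrC.
by rewrite ler_pM2r // ler_nat.
Qed.

End MarginalUtility.

Lemma RS_const (R : realType) (A : finType) (s d : R) (g : network A) j :
  RS (fun=> s) (fun=> d) g j = s - d * (deg g j)%:R.
Proof. by rewrite /RS sumr_const mulr_natr. Qed.

Section Stability.
Variables (R : realType) (A : finType) (t : ssn R A) (n : nat).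
Hypotheses (t_valid : ssn_valid t) (stab_point_n : stab_point t = n%:R).
Implicit Types (g : network A) (i j x y : A).

Lemma willing_mutual_iff g i j : i != j -> ~~ linked g i j ->
  willing t g i j /\ willing t g j i <-> (deg g i < n)%N /\ (deg g j < n)%N.
Proof.
move=> neq_ij unlinked_ij.
have unlinked_ji : ~~ linked g j i by rewrite linkedC.
have neq_ji : j != i by rewrite eq_sym.
have deg_i := deg_add_link_self neq_ij unlinked_ij.
have deg_j := deg_add_link_self neq_ji unlinked_ji.
rewrite -!(ltr_nat R) -stab_point_n.
move: t_valid stab_point_n; rewrite /willing /util deg_i deg_j.
case: t => [beta lam c s d|beta lam c s d|beta lam c s d b|beta lam c s d b] /=.
- case=> /andP[beta_gt0 _] lam01 /andP[c_gt0 _] _ [c_lt _] _.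
  rewrite !MO_utility_increasing_iff // -!(ltr_int R).
  by split=> [[[? _] [? _]]|[? ?]].
- case=> /andP[beta_gt0 _] lam01 /andP[c_gt0 _] [d_gt0 [m s_div_d]] [c_lt _] _.
  rewrite !MO_utility_increasing_iff // -!(ltr_int R) !RS_const.
  rewrite !(remaining_capacity_ge_iff _ d_gt0 s_div_d) s_div_d !lt_min !ltr_nat.
  split=> [[[ci jm] [cj im]]|[/andP[ci im] /andP[cj jm]]].
    by split; apply/andP; split.
  by do !split.
- case=> beta_gt0 lam01 _ _ _.
  rewrite !SO_utility_increasing // !ltr_nat.
  by rewrite (deg_lt_unlinked neq_ij) // (deg_lt_unlinked neq_ji).
- case=> beta_gt0 lam01 [d_gt0 [m s_div_d]] [c_gt0 [m' b_div_c]] _.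
  rewrite !SO_utility_increasing // !RS_const /RB.
  rewrite !(remaining_capacity_ge_iff _ d_gt0 s_div_d).
  rewrite !(remaining_capacity_ge_iff _ c_gt0 b_div_c) s_div_d b_div_c.
  rewrite !lt_min !ltr_nat.
  split=> [[[_ [jm ib]] [_ [im jb]]]|[/andP[im ib] /andP[jm jb]]].
    by split; apply/andP; split.
  by do !split.
Qed.

Lemma evolved_deg_le g : evolved t g -> forall x, (deg g x <= n)%N.
Proof.
elim=> [|{}g i j _ IH neq_ij unlinked willing_ij willing_ji] x.
  by rewrite deg_null.
have [deg_i deg_j] :=
  (willing_mutual_iff neq_ij unlinked).1 (conj willing_ij willing_ji).
have [->|neq_xi] := eqVneq x i; first by rewrite deg_add_link_self.
have [->|neq_xj] := eqVneq x j; last by rewrite deg_add_link_other.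
by rewrite add_linkC deg_add_link_self 1?eq_sym // linkedC.
Qed.

Lemma stable_unsaturated_linked g : bilaterally_stable t g ->
  forall x y, x != y -> (deg g x < n)%N -> (deg g y < n)%N -> linked g x y.
Proof.
move=> [_ no_mutual_addition] x y neq_xy deg_x deg_y.
apply/negPn/negP => unlinked.
have [willing_xy willing_yx] :=
  (willing_mutual_iff neq_xy unlinked).2 (conj deg_x deg_y).
exact: no_mutual_addition _ _ neq_xy unlinked willing_xy willing_yx.
Qed.

End Stability.

Theorem corollary4 (R : realType) (A : finType) (t : ssn R A) (g : network A) :
  ssn_valid t ->
  evolved t g ->
  (2 <= #|components g|)%N ->
  odd_real (stab_point t) ->
  stab_point t < (#|A|)%:R ->
  bilaterally_stable t g ->
  (#|components g| - 1 <=
     #|[set C in components g | ~~ odd #|C| & (stab_point t < (#|C|)%:R)%R]|)%N.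
Proof.
move=> t_valid g_evolved _ [k stab_point_k] _ g_stable.
have [n stab_point_n odd_n] : exists2 n, stab_point t = n%:R & odd n.
  exists k.*2.+1; last by rewrite /= odd_double.
  by rewrite stab_point_k -mul2n addn1.
under eq_finset => C do rewrite stab_point_n ltr_nat.
have deg_le_n := evolved_deg_le t_valid stab_point_n g_evolved.
have unsaturated_linked := stable_unsaturated_linked t_valid stab_point_n g_stable.
exact: components_count_saturated odd_n deg_le_n unsaturated_linked.
Qed.
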